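(* Let $\mathbf X$ be a deterministic $d\times m$ real matrix and $\boldsymbol\varepsilon=(\varepsilon_1,\dots,\varepsilon_m)$ a vector of i.i.d. Rademacher random variables. If $\|\mathbf X\|_F^2\le1/8$, then $$\mathbb E\big[\exp\{\|\mathbf X\boldsymbol\varepsilon\|_2^2\}\big]\le\exp\{10\|\mathbf X\|_F^2\}.$$
   Context: $\|\cdot\|_F$ is the Frobenius norm; a Rademacher variable takes values $\pm1$ with probability $1/2$ each. *)

From HB Require Import structures.
From mathcomp Require Import all_boot all_order all_algebra.
From mathcomp Require Import reals.
From mathcomp Require Import sequences exp.
Set Implicit Arguments. Unset Strict Implicit. Unset Printing Implicit Defensive.
Import Order.TTheory GRing.Theory Num.Theory.
Local Open Scope ring_scope.

Definition frob2 (R : realType) (d m : nat) (X : 'M[R]_(d, m)) : R :=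
  \sum_(i < d) \sum_(j < m) X i j ^+ 2.

Definition norm2sq (R : realType) (d : nat) (v : 'cV[R]_d) : R :=
  \sum_(i < d) v i 0 ^+ 2.

Definition sign_vec (R : realType) (m : nat) (s : {ffun 'I_m -> bool}) : 'cV[R]_m :=
  \col_(j < m) (if s j then 1 else -1).

(* Expectation of f(eps) for eps a vector of m i.i.d. Rademacher variables:
   eps is uniformly distributed on {-1,1}^m. *)
Definition rademacher_expect (R : realType) (m : nat) (f : 'cV[R]_m -> R) : R :=
  (2 ^+ m)^-1 * \sum_(s : {ffun 'I_m -> bool}) f (sign_vec R s).

From HB Require Import structures.
From mathcomp Require Import all_boot all_order all_algebra.
From mathcomp Require Import reals sequences exp.
From mathcomp Require Import ring lra.
Import Order.TTheory GRing.Theory Num.Theory.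
Local Open Scope ring_scope.
Set Implicit Arguments. Unset Strict Implicit. Unset Printing Implicit Defensive.

(* Reveal the signs one column at a time. If w is the signed sum of the
   columns already revealed and y is the next column, the two values of its
   sign contribute exp (|y|^2 + |w|^2) (e^u + e^-u) with u = 2 <w, y>, and
   e^u + e^-u <= 2 exp (16/9 u^2) = 2 exp ((8/3 <w, y>)^2). This square is the
   contribution of one more coordinate, 8/3 <x_j, y>, appended to every earlier
   column x_j, so what remains is the same average for an augmented matrix.
   By Cauchy-Schwarz its squared Frobenius norm grows by at most
   64/9 |y|^2 |X|_F^2 <= 8/9 |y|^2, which keeps the budget |X|_F^2 <= 1/8 and
   is absorbed by the constant 10 since 1 + 10 * 8/9 <= 10. *)

Lemma big_option (V : nmodType) (T : finType) (F : option T -> V) :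
  \sum_o F o = F None + \sum_t F (Some t).
Proof.
rewrite (bigD1 None) //=; congr (_ + _).
by rewrite (reindex_omap Some id) //=; [apply: eq_bigl => t; rewrite eqxx | case].
Qed.

Lemma big_ord_prefixS (V : nmodType) (m k : nat) (hk : (k < m)%N) (F : 'I_m -> V) :
  \sum_(j < m | (j < k.+1)%N) F j = F (Ordinal hk) + \sum_(j < m | (j < k)%N) F j.
Proof.
rewrite (bigD1 (Ordinal hk)) //=; congr (_ + _); apply: eq_bigl => j.
by rewrite ltnS [(j < k)%N]ltn_neqAle andbC.
Qed.

Section RealVectors.
Variable R : realType.

Lemma expR_add_expRN_le (u : R) :
  expR u + expR (- u) <= 2 * expR (16 / 9 * u ^+ 2).
Proof.
have [large | small] := lerP (9 / 16) `|u|.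
  have le_sqr : `|u| <= 16 / 9 * u ^+ 2.
    by rewrite -(real_normK (num_real u)); nra.
  have le_pos : expR u <= expR (16 / 9 * u ^+ 2).
    by rewrite ler_expR; apply: le_trans le_sqr; apply: ler_norm.
  have le_neg : expR (- u) <= expR (16 / 9 * u ^+ 2).
    by rewrite ler_expR; apply: le_trans le_sqr; rewrite -normrN ler_norm.
  lra.
have [lt_u gt_u] : - (9 / 16) < u /\ u < 9 / 16.
  by move: small; rewrite ltr_norml => /andP[].
have inv := expRxMexpNx_1 u.
have ep := expR_gt0 u; have en := expR_gt0 (- u).
(* From 1 - u <= e^-u and 1 + u <= e^u: (e^u + e^-u) (1 - u^2) <= 2. *)
have le_pos : expR u * (1 - u) <= 1 by have := expR_ge1Dx (- u); nra.
have le_neg : expR (- u) * (1 + u) <= 1 by have := expR_ge1Dx u; nra.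
have cosh_mul : (expR u + expR (- u)) * (1 - u ^+ 2) <= 2 by nra.
have sqr_le : u ^+ 2 <= 81 / 256 by nra.
have : 1 <= (1 + 16 / 9 * u ^+ 2) * (1 - u ^+ 2) by nra.
have := expR_ge1Dx (16 / 9 * u ^+ 2).
nra.
Qed.

Definition sqnorm (T : finType) (v : T -> R) : R := \sum_t v t ^+ 2.

Definition dot (T : finType) (u v : T -> R) : R := \sum_t u t * v t.

Section FiniteVectors.
Variable T : finType.
Implicit Types (u v w y : T -> R) (c : R).

Lemma sqnorm_ge0 v : 0 <= sqnorm v.
Proof. by apply: sumr_ge0 => t _; apply: sqr_ge0. Qed.

Lemma eq_sqnorm u v : u =1 v -> sqnorm u = sqnorm v.
Proof. by move=> uv; apply: eq_bigr => t _; rewrite uv. Qed.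

Lemma dot_sqr_le u v : dot u v ^+ 2 <= sqnorm u * sqnorm v.
Proof.
(* Lagrange: 2 (|u|^2 |v|^2 - <u,v>^2) = \sum_(s,t) (u s v t - u t v s)^2. *)
have dotE : dot u v ^+ 2 = \sum_s \sum_t (u s * v s) * (u t * v t).
  by rewrite expr2 mulr_suml; apply: eq_bigr => s _; rewrite mulr_sumr.
have normE : sqnorm u * sqnorm v = \sum_s \sum_t u s ^+ 2 * v t ^+ 2.
  by rewrite mulr_suml; apply: eq_bigr => s _; rewrite mulr_sumr.
have normCE : sqnorm u * sqnorm v = \sum_s \sum_t u t ^+ 2 * v s ^+ 2.
  by rewrite normE exchange_big.
suff : dot u v ^+ 2 + dot u v ^+ 2 <= sqnorm u * sqnorm v + sqnorm u * sqnorm v.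
  by lra.
rewrite {1}dotE {1}normE normCE dotE -!big_split /=.
apply: ler_sum => s _; rewrite -!big_split /=; apply: ler_sum => t _.
have := sqr_ge0 (u s * v t - u t * v s); nra.
Qed.

Lemma sqnorm_scale_add c y w :
  sqnorm (fun t => c * y t + w t) = c ^+ 2 * sqnorm y + 2 * c * dot w y + sqnorm w.
Proof. by rewrite /sqnorm /dot !mulr_sumr -!big_split; apply: eq_bigr => t _ /=; ring. Qed.

Lemma expR_sqnorm_scale_add_le c y w : c ^+ 2 = 1 ->
  expR (sqnorm (fun t => c * y t + w t)) + expR (sqnorm (fun t => - c * y t + w t))
    <= 2 * expR (sqnorm y) * expR (sqnorm w + 64 / 9 * dot w y ^+ 2).
Proof.
move=> c2; rewrite !sqnorm_scale_add sqrrN c2 !mul1r mulrN mulNr.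
set a := sqnorm y; set W := sqnorm w; set u := 2 * c * dot w y.
have -> : 64 / 9 * dot w y ^+ 2 = 16 / 9 * u ^+ 2 by rewrite /u !exprMn c2; field.
have splitE (r : R) : expR (a + r + W) = expR (a + W) * expR r.
  by rewrite -expRD; congr expR; ring.
have -> : 2 * expR a * expR (W + 16 / 9 * u ^+ 2)
        = expR (a + W) * (2 * expR (16 / 9 * u ^+ 2)).
  by rewrite !expRD; ring.
rewrite !splitE -mulrDr ler_pM2l ?expR_gt0 //.
exact: expR_add_expRN_le.
Qed.

End FiniteVectors.

Section SignPrefixes.
Variable m : nat.
Implicit Types (s : {ffun 'I_m -> bool}) (k : nat).

Definition signb (b : bool) : R := if b then 1 else -1.

Lemma signb_sqr b : signb b ^+ 2 = 1.
Proof. by case: b; rewrite /signb ?sqrrN expr1n. Qed.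

Lemma signbN b : signb (~~ b) = - signb b.
Proof. by case: b; rewrite /signb ?opprK. Qed.

Definition flip_at (j0 : 'I_m) s : {ffun 'I_m -> bool} :=
  [ffun j => if j == j0 then ~~ s j else s j].

Lemma flip_atK j0 : involutive (flip_at j0).
Proof. by move=> s; apply/ffunP => j; rewrite !ffunE; case: eqP; rewrite ?negbK. Qed.

Lemma sum_add_flip_at j0 (F : {ffun 'I_m -> bool} -> R) :
  \sum_s (F s + F (flip_at j0 s)) = 2 * \sum_s F s.
Proof.
rewrite big_split /= mulr_natl mulr2n; congr (_ + _).
by rewrite [RHS](reindex_inj (inv_inj (flip_atK j0))).
Qed.

Definition signed_prefix (T : finType) k (x : 'I_m -> T -> R) s (t : T) : R :=
  \sum_(j < m | (j < k)%N) signb (s j) * x j t.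

Definition prefix_frob (T : finType) k (x : 'I_m -> T -> R) : R :=
  \sum_(j < m | (j < k)%N) sqnorm (x j).

Section Family.
Variables (T : finType) (x : 'I_m -> T -> R).

Lemma signed_prefix0 s : signed_prefix 0 x s =1 fun=> 0.
Proof. by move=> t; rewrite /signed_prefix big_pred0. Qed.

Lemma signed_prefixS k (hk : (k < m)%N) s :
  signed_prefix k.+1 x s
    =1 fun t => signb (s (Ordinal hk)) * x (Ordinal hk) t + signed_prefix k x s t.
Proof. by move=> t; rewrite /signed_prefix big_ord_prefixS. Qed.

Lemma signed_prefix_flip_at k (j0 : 'I_m) s : (k <= j0)%N ->
  signed_prefix k x (flip_at j0 s) =1 signed_prefix k x s.
Proof.
move=> le_k_j0 t; apply: eq_bigr => j lt_j_k; rewrite ffunE.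
by case: eqP => // j_j0; move: lt_j_k; rewrite j_j0 ltnNge le_k_j0.
Qed.

Lemma dot_signed_prefix k s y :
  dot (signed_prefix k x s) y = \sum_(j < m | (j < k)%N) signb (s j) * dot (x j) y.
Proof.
rewrite /dot /signed_prefix; under eq_bigr do rewrite mulr_suml.
rewrite exchange_big /=; apply: eq_bigr => j _; rewrite mulr_sumr.
by apply: eq_bigr => t _; rewrite mulrA.
Qed.

Definition augment (y : T -> R) (j : 'I_m) (o : option T) : R :=
  if o is Some t then x j t else 8 / 3 * dot (x j) y.

Lemma sqnorm_signed_prefix_augment k y s :
  sqnorm (signed_prefix k (augment y) s)
    = sqnorm (signed_prefix k x s) + 64 / 9 * dot (signed_prefix k x s) y ^+ 2.
Proof.
rewrite /sqnorm big_option addrC; congr (_ + _).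
rewrite dot_signed_prefix /signed_prefix /=.
under eq_bigr do rewrite mulrCA.
by rewrite -mulr_sumr exprMn; congr (_ * _); field.
Qed.

Lemma prefix_frob_augment k y :
  prefix_frob k (augment y)
    = prefix_frob k x + 64 / 9 * \sum_(j < m | (j < k)%N) dot (x j) y ^+ 2.
Proof.
rewrite /prefix_frob mulr_sumr -big_split; apply: eq_bigr => j _.
by rewrite /sqnorm big_option addrC /= exprMn; congr (_ + _ * _); field.
Qed.

End Family.

Lemma sum_expR_signed_prefixS (T : finType) k (hk : (k < m)%N) (x : 'I_m -> T -> R) :
  \sum_s expR (sqnorm (signed_prefix k.+1 x s))
    <= expR (sqnorm (x (Ordinal hk)))
       * \sum_s expR (sqnorm (signed_prefix k (augment x (x (Ordinal hk))) s)).
Proof.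
set j0 := Ordinal hk; set y := x j0.
have pair_le s :
    expR (sqnorm (signed_prefix k.+1 x s))
      + expR (sqnorm (signed_prefix k.+1 x (flip_at j0 s)))
    <= 2 * (expR (sqnorm y) * expR (sqnorm (signed_prefix k (augment x y) s))).
  have sE : sqnorm (signed_prefix k.+1 x s)
      = sqnorm (fun t => signb (s j0) * y t + signed_prefix k x s t).
    by apply: eq_sqnorm => t; rewrite signed_prefixS.
  have flipE : sqnorm (signed_prefix k.+1 x (flip_at j0 s))
      = sqnorm (fun t => - signb (s j0) * y t + signed_prefix k x s t).
    by apply: eq_sqnorm => t; rewrite signed_prefixS ffunE eqxx signbN signed_prefix_flip_at.
  rewrite sE flipE sqnorm_signed_prefix_augment mulrA.
  exact: expR_sqnorm_scale_add_le (signb_sqr _).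
rewrite -(@ler_pM2l _ 2) // -(sum_add_flip_at j0) !mulr_sumr.
by apply: ler_sum => s _; apply: pair_le.
Qed.

Lemma sum_expR_signed_prefix_le k : (k <= m)%N ->
  forall (T : finType) (x : 'I_m -> T -> R), prefix_frob k x <= 1 / 8 ->
  \sum_s expR (sqnorm (signed_prefix k x s)) <= 2 ^+ m * expR (10 * prefix_frob k x).
Proof.
elim: k => [_ T x _ | k IH hk T x small].
  have -> : prefix_frob 0 x = 0 by rewrite /prefix_frob big_pred0.
  rewrite mulr0 expR0 mulr1.
  have Q0 s : sqnorm (signed_prefix 0 x s) = 0.
    by rewrite (eq_sqnorm (signed_prefix0 x s)) /sqnorm big1 // => t _; rewrite expr2 mulr0.
  under eq_bigr do rewrite Q0 expR0.
  by rewrite sumr_const card_ffun card_bool card_ord natrX.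
set y := x (Ordinal hk); set a := sqnorm y; set S := prefix_frob k x.
set C := \sum_(j < m | (j < k)%N) dot (x j) y ^+ 2.
have a_ge0 : 0 <= a := sqnorm_ge0 y.
have S_ge0 : 0 <= S by apply: sumr_ge0 => j _; apply: sqnorm_ge0.
have C_le : C <= a * S.
  by rewrite /S /prefix_frob mulr_sumr; apply: ler_sum => j _; rewrite mulrC dot_sqr_le.
have frobS : prefix_frob k.+1 x = a + S by rewrite /prefix_frob big_ord_prefixS.
have frob_aug : prefix_frob k (augment x y) = S + 64 / 9 * C := prefix_frob_augment x k y.
rewrite frobS in small *.
have small_aug : prefix_frob k (augment x y) <= 1 / 8 by rewrite frob_aug; nra.
have budget : a + 10 * prefix_frob k (augment x y) <= 10 * (a + S) by rewrite frob_aug; nra.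
apply: le_trans (sum_expR_signed_prefixS hk x) _.
apply: le_trans (ler_wpM2l (ltW (expR_gt0 a)) (IH (ltnW hk) _ _ small_aug)) _.
by rewrite mulrCA -expRD ler_wpM2l ?exprn_ge0 // ler_expR.
Qed.

End SignPrefixes.
End RealVectors.

Theorem lemma9 (R : realType) (d m : nat) (X : 'M[R]_(d, m)) :
  frob2 X <= 1 / 8 ->
  rademacher_expect (fun eps : 'cV[R]_m => expR (norm2sq (X *m eps)))
    <= expR (10 * frob2 X).
Proof.
pose x (j : 'I_m) (i : 'I_d) := X i j.
have frobE : prefix_frob m x = frob2 X.
  rewrite /prefix_frob /frob2 [RHS]exchange_big /=.
  by apply: eq_bigl => j; rewrite ltn_ord.
have normE s : norm2sq (X *m sign_vec R s) = sqnorm (signed_prefix m x s).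
  apply: eq_bigr => i _; congr (_ ^+ 2); rewrite mxE.
  by apply: eq_big => [j | j _]; rewrite ?ltn_ord // mxE mulrC.
rewrite -frobE /rademacher_expect => small.
under eq_bigr do rewrite normE.
rewrite ler_pdivrMl ?exprn_gt0 //.
exact: sum_expR_signed_prefix_le.
Qed.
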